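(* Let $x_1,\dots,x_n$ be fixed data, $1\le k\le n$, and $s$ a real-valued permutation-symmetric function of $k$ arguments. Let $(I_1,\dots,I_k)$ be uniformly distributed over all $k$-tuples of distinct indices in $\{1,\dots,n\}$ (subsampling without replacement), $X_i^*=x_{I_i}$, $s^*=s(X_1^*,\dots,X_k^* )$, and $w_j^*=\mathbf{1}\{j\in\{I_1,\dots,I_k\}\}$. With $\mathbb{E}_*,\mathrm{Cov}_*$ denoting expectation and covariance over this subsampling, let $e_j=\mathbb{E}_*[s^*\mid I_1=j]$ and $s_0=\mathbb{E}_*[s^*]$. Then for every $j$, $$\mathrm{Cov}_*(s^*,w_j^* )=\frac{k}{n}(e_j-s_0),$$ and consequently $$\sum_{j=1}^n\mathrm{Cov}_*^2(s^*,w_j^* )=\left(\frac{k}{n}\right)^2\sum_{j=1}^n(e_j-s_0)^2 .$$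
   Context: Equivalently $e_j=\binom{n-1}{k-1}^{-1}\sum_{S\ni j}s(x_S)$ and $s_0=\binom{n}{k}^{-1}\sum_S s(x_S)$, sums over $k$-subsets $S\subseteq\{1,\dots,n\}$. The quantity $\sum_j\mathrm{Cov}_*^2(s^*,w_j^* )$ is called the pseudo infinitesimal jackknife $\mathrm{ps}\text{-}\mathrm{IJ}_\mathrm{U}$. *)

From HB Require Import structures.
From mathcomp Require Import all_boot all_order all_algebra all_fingroup.
Set Implicit Arguments. Unset Strict Implicit. Unset Printing Implicit Defensive.
Import Order.TTheory GRing.Theory Num.Theory.
Local Open Scope ring_scope.

(* Subsampling without replacement: the sample space is the set of injective
   maps I : 'I_k -> 'I_n, i.e. k-tuples (I_1,...,I_k) of distinct indices,
   with the uniform distribution. *)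
Definition subsamples (n k : nat) : {set {ffun 'I_k -> 'I_n}} :=
  [set I : {ffun 'I_k -> 'I_n} | injectiveb I].

Definition Estar (R : realFieldType) (n k : nat) (f : {ffun 'I_k -> 'I_n} -> R) : R :=
  (\sum_(I in subsamples n k) f I) / #|subsamples n k|%:R.

Definition Estar_cond (R : realFieldType) (n k : nat)
    (f : {ffun 'I_k -> 'I_n} -> R) (P : pred {ffun 'I_k -> 'I_n}) : R :=
  (\sum_(I in subsamples n k | P I) f I)
    / #|[set I in subsamples n k | P I]|%:R.

Definition Covstar (R : realFieldType) (n k : nat) (f g : {ffun 'I_k -> 'I_n} -> R) : R :=
  Estar (fun I => f I * g I) - Estar f * Estar g.

Definition sstar (R : realFieldType) (T : Type) (n k : nat)
    (s : {ffun 'I_k -> T} -> R) (x : 'I_n -> T) (I : {ffun 'I_k -> 'I_n}) : R :=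
  s [ffun i => x (I i)].

Definition wstar (R : realFieldType) (n k : nat) (j : 'I_n) (I : {ffun 'I_k -> 'I_n}) : R :=
  (j \in codom I)%:R.

Definition perm_symmetric (R : realFieldType) (T : Type) (k : nat)
    (s : {ffun 'I_k -> T} -> R) : Prop :=
  forall (sigma : 'S_k) (v : {ffun 'I_k -> T}), s [ffun i => v (sigma i)] = s v.

From HB Require Import structures.
From mathcomp Require Import all_boot all_order all_algebra all_fingroup.
From mathcomp Require Import ring.
Import Order.TTheory GRing.Theory Num.Theory.
Set Implicit Arguments.
Unset Strict Implicit.
Unset Printing Implicit Defensive.
Local Open Scope ring_scope.

(* Writing w_j^* as the sum over positions i of 1{I_i = j}, E_*[s^* w_j^*] is a
   sum of k terms which, by the symmetry of s, all equal E_*[s^* 1{I_1 = j}].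
   Relabelling the values by a transposition shows that the events {I_1 = j}
   all have the same probability 1/n.  Hence E_*[s^* w_j^*] = (k/n) e_j and
   E_*[w_j^*] = k/n, which gives the covariance formula; the sum of squares
   follows termwise. *)

Lemma injectiveb_ffun_perm (aT rT : finType) (I : {ffun aT -> rT}) (sg : {perm aT}) :
  injectiveb [ffun t => I (sg t)] = injectiveb I.
Proof.
apply/injectiveP/injectiveP => inj a b.
  rewrite -[a](permKV sg) -[b](permKV sg) => E.
  by congr (sg _); apply: inj; rewrite !ffunE.
by rewrite !ffunE => /inj /perm_inj.
Qed.

Lemma injectiveb_perm_ffun (aT rT : finType) (tau : {perm rT}) (I : {ffun aT -> rT}) :
  injectiveb [ffun t => tau (I t)] = injectiveb I.
Proof.
apply/injectiveP/injectiveP => inj a b.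
  by move=> E; apply: inj; rewrite !ffunE E.
by rewrite !ffunE => /perm_inj /inj.
Qed.

Section Subsampling.
Variables (R : realFieldType) (n k : nat).
Local Notation S := (subsamples n k).
Local Notation subsample := {ffun 'I_k -> 'I_n}.

Definition subsample_invariant (f : subsample -> R) : Prop :=
  forall (sg : 'S_k) (I : subsample), f [ffun t => I (sg t)] = f I.

Lemma sstar_invariant (T : Type) (s : {ffun 'I_k -> T} -> R) (x : 'I_n -> T) :
  perm_symmetric s -> subsample_invariant (sstar s x).
Proof.
move=> hsym sg I; rewrite /sstar -(hsym sg [ffun i => x (I i)]).
by congr s; apply/ffunP => t; rewrite !ffunE.
Qed.

Lemma wstar_sum_indicator (j : 'I_n) (I : subsample) : injective I ->
  wstar R j I = \sum_(i < k) (I i == j)%:R.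
Proof.
move=> injI; rewrite /wstar.
case: (boolP (j \in codom I)) => [/codomP [i0 ->] | notin].
  rewrite (bigD1 i0) //= eqxx big1 ?addr0 // => i ne_i.
  by rewrite (inj_eq injI) (negbTE ne_i).
rewrite big1 // => i _; case: eqP => // Eij.
by case/negP: notin; rewrite -Eij codom_f.
Qed.

Lemma sum_subsamples_at_pos_indep (f : subsample -> R) (hf : subsample_invariant f)
    (i i' : 'I_k) (j : 'I_n) :
  \sum_(I in S | I i == j) f I = \sum_(I in S | I i' == j) f I.
Proof.
rewrite (reindex_inj (h := fun I : subsample => [ffun t => I (tperm i i' t)])).
  apply: eq_big => I; last by rewrite hf.
  by rewrite !inE injectiveb_ffun_perm ffunE tpermL.
move=> I1 I2 /ffunP E12; apply/ffunP => t; have := E12 (tperm i i' t).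
by rewrite !ffunE tpermK.
Qed.

Lemma sum_mul_wstar (f : subsample -> R) (hf : subsample_invariant f)
    (i : 'I_k) (j : 'I_n) :
  \sum_(I in S) f I * wstar R j I = k%:R * \sum_(I in S | I i == j) f I.
Proof.
under eq_bigr => I.
  rewrite inE => /injectiveP injI.
  rewrite wstar_sum_indicator // mulr_sumr.
  over.
rewrite exchange_big /= -[k in k%:R]card_ord -sumr_const mulr_suml.
apply: eq_bigr => i' _; rewrite mul1r -(sum_subsamples_at_pos_indep hf i' i) big_mkcondr.
by apply: eq_bigr => I _; case: (I i' == j); rewrite ?mulr1 ?mulr0.
Qed.

Lemma card_subsamples_at_indep (i : 'I_k) (j j' : 'I_n) :
  #|[set I in S | I i == j]| = #|[set I in S | I i == j']|.
Proof.
rewrite -!sum1_card.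
rewrite (reindex_inj (h := fun I : subsample => [ffun t => tperm j j' (I t)])).
  apply: eq_bigl => I; rewrite !inE injectiveb_perm_ffun ffunE.
  by rewrite -[X in _ == X](tpermR j j') (inj_eq perm_inj).
move=> I1 I2 /ffunP E12; apply/ffunP => t; have := E12 t.
by rewrite !ffunE => /perm_inj.
Qed.

Lemma card_subsamples (i : 'I_k) (j : 'I_n) :
  #|S| = (n * #|[set I in S | I i == j]|)%N.
Proof.
rewrite -sum1_card (partition_big (fun I : subsample => I i) predT) //=.
under eq_bigr => j' _ do rewrite sum1dep_card (card_subsamples_at_indep i j' j).
by rewrite sum_nat_const card_ord.
Qed.

Lemma card_subsamples_gt0 : (k <= n)%N -> (0 < #|S|)%N.
Proof.
move=> hkn; apply/card_gt0P; exists [ffun i => widen_ord hkn i].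
by rewrite inE; apply/injectiveP => a b; rewrite !ffunE => /(congr1 val) /= /val_inj.
Qed.

Lemma Estar_mul_wstar (f : subsample -> R) (hf : subsample_invariant f)
    (i : 'I_k) (j : 'I_n) :
  Estar (fun I => f I * wstar R j I)
    = k%:R / n%:R * Estar_cond f (fun I => I i == j).
Proof.
rewrite /Estar /Estar_cond (sum_mul_wstar hf i) (card_subsamples i j) natrM.
by rewrite invfM; ring.
Qed.

Lemma Estar_wstar (i : 'I_k) (j : 'I_n) : (k <= n)%N ->
  Estar (wstar R j : subsample -> R) = k%:R / n%:R.
Proof.
move=> hkn.
have /andP[n_gt0 Nj_gt0] : (0 < n)%N && (0 < #|[set I in S | I i == j]|)%N.
  by rewrite -muln_gt0 -card_subsamples card_subsamples_gt0.
rewrite /Estar; under eq_bigr do rewrite -[wstar R j _]mul1r.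
rewrite (sum_mul_wstar (f := fun=> 1) (fun _ _ => erefl) i) sumr_const.
rewrite (card_subsamples i j) -cardsE natrM; field.
by rewrite !pnatr_eq0 -!lt0n n_gt0; exact: Nj_gt0.
Qed.

Lemma Covstar_wstar (f : subsample -> R) (hf : subsample_invariant f)
    (i : 'I_k) (j : 'I_n) : (k <= n)%N ->
  Covstar f (wstar R j) = k%:R / n%:R * (Estar_cond f (fun I => I i == j) - Estar f).
Proof.
move=> hkn; rewrite /Covstar (Estar_mul_wstar hf i) (Estar_wstar i j hkn).
by rewrite mulrBr [Estar f * _]mulrC.
Qed.

End Subsampling.

Theorem proposition1 (R : realFieldType) (T : Type) (n k : nat)
    (hk1 : (0 < k)%N) (hkn : (k <= n)%N)
    (x : 'I_n -> T) (s : {ffun 'I_k -> T} -> R)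
    (hsym : perm_symmetric s) :
  let sst := sstar s x in
  let s0 := Estar sst in
  let e := fun j : 'I_n => Estar_cond sst (fun I => I (Ordinal hk1) == j) in
  (forall j : 'I_n,
     Covstar sst (wstar R j) = (k%:R / n%:R) * (e j - s0)) /\
  \sum_(j < n) (Covstar sst (wstar R j)) ^+ 2
    = (k%:R / n%:R) ^+ 2 * \sum_(j < n) (e j - s0) ^+ 2.
Proof.
move=> sst s0 e.
have cov j : Covstar sst (wstar R j) = (k%:R / n%:R) * (e j - s0).
  exact: Covstar_wstar (sstar_invariant x hsym) _ _ hkn.
split=> //; rewrite mulr_sumr.
by apply: eq_bigr => j _; rewrite cov exprMn.
Qed.
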